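(* Let $d>K\ge1$, $\mathbf Q\in\mathrm{St}(d,K)$, $\lambda_1>\dots>\lambda_K>0$, $\boldsymbol\Theta=\mathrm{diag}(\sqrt{\lambda_1},\dots,\sqrt{\lambda_K})$, $a_1>\dots>a_K>0$, $g(\mathbf X)=\mathrm{tr}(\mathbf X^\top\mathbf Q\boldsymbol\Theta^2\mathbf Q^\top\mathbf X\,\mathrm{diag}(a_1,\dots,a_K))$. Let $\delta_3\in(0,\tfrac{\sqrt2}{2})$ and $\eta>0$ be such that $d_F(\mathbf X,\mathbf Q)\le\eta\|\mathrm{grad}\,g(\mathbf X)\|_F$ for all $\mathbf X\in\mathrm{St}(d,K)$ with $d_F(\mathbf X,\mathbf Q)\le\delta_3$. Then there exists $\beta_1\in(0,\tfrac23\delta_3)$ such that $$g(\mathbf Q)-g(\mathbf X)\ge\frac{1}{4\eta}d_F^2(\mathbf X,\mathbf Q)\quad\text{for all }\mathbf X\in\mathrm{St}(d,K)\text{ with }d_F(\mathbf X,\mathbf Q)\le\beta_1.$$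
   Context: $\mathrm{St}(d,K)=\{\mathbf X\in\mathbb R^{d\times K}:\mathbf X^\top\mathbf X=\mathbf I_K\}$. $d_F(\mathbf X,\mathbf Q)=\min_{\mathbf q\in\{1,-1\}^K}\|\mathbf X-\mathbf Q\,\mathrm{diag}(\mathbf q)\|_F$. $\nabla g(\mathbf X)=2\mathbf Q\boldsymbol\Theta^2\mathbf Q^\top\mathbf X\,\mathrm{diag}(a_1,\dots,a_K)$ is the Euclidean gradient and $\mathrm{grad}\,g(\mathbf X)=(\mathbf I_d-\tfrac12\mathbf X\mathbf X^\top)(\nabla g(\mathbf X)-\mathbf X\nabla g(\mathbf X)^\top\mathbf X)$. (Such $\delta_3,\eta$ are known to exist.) *)

From HB Require Import structures.
From mathcomp Require Import all_boot all_order all_algebra.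
From mathcomp Require Import reals.
Set Implicit Arguments. Unset Strict Implicit. Unset Printing Implicit Defensive.
Import Order.TTheory GRing.Theory Num.Theory.
Local Open Scope ring_scope.

Section Defs.
Variable R : realType.

Definition stiefel (d K : nat) (X : 'M[R]_(d, K)) : Prop := X^T *m X = 1%:M.

Definition frob (m n : nat) (A : 'M[R]_(m, n)) : R :=
  Num.sqrt (\sum_(i < m) \sum_(j < n) (A i j) ^+ 2).

Definition signvec (K : nat) (q : {ffun 'I_K -> bool}) : 'rV[R]_K :=
  \row_i (if q i then -1 else 1).

Definition dF (d K : nat) (X Q : 'M[R]_(d, K)) : R :=
  \big[Order.min/frob (X - Q)]_(q : {ffun 'I_K -> bool})
      frob (X - Q *m diag_mx (signvec q)).

Definition Theta (K : nat) (lam : 'I_K -> R) : 'M[R]_K :=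
  diag_mx (\row_i Num.sqrt (lam i)).

Definition diagA (K : nat) (a : 'I_K -> R) : 'M[R]_K := diag_mx (\row_i a i).

Definition gfun (d K : nat) (Q : 'M[R]_(d, K)) (lam a : 'I_K -> R)
  (X : 'M[R]_(d, K)) : R :=
  \tr (X^T *m Q *m (Theta lam *m Theta lam) *m Q^T *m X *m diagA a).

Definition egrad (d K : nat) (Q : 'M[R]_(d, K)) (lam a : 'I_K -> R)
  (X : 'M[R]_(d, K)) : 'M[R]_(d, K) :=
  2%:R *: (Q *m (Theta lam *m Theta lam) *m Q^T *m X *m diagA a).

Definition rgrad (d K : nat) (Q : 'M[R]_(d, K)) (lam a : 'I_K -> R)
  (X : 'M[R]_(d, K)) : 'M[R]_(d, K) :=
  (1%:M - 2%:R^-1 *: (X *m X^T)) *m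
    (egrad Q lam a X - X *m (egrad Q lam a X)^T *m X).

End Defs.

From HB Require Import structures.
From mathcomp Require Import all_boot all_order all_algebra.
From mathcomp Require Import reals ring lra.

(* Testing the error bound at two families of Stiefel points near [Q] forces
   spectral gaps: rotating column [i] of [Q] towards a unit vector orthogonal
   to its range gives [a_i lam_i >= 1/(2 eta)], and rotating columns [i] and
   [k] of [Q] into each other gives [(lam_i - lam_k) (a_i - a_k) >= 1/eta].
   Conversely, write [W = Q^T X] and [V = X - Q W], so that
   [W^T W + V^T V = I] and
     g(Q) - g(X) = sum_i a_i lam_i |V e_i|^2
                   + sum_(i,k) a_i (lam_i - lam_k) W_ki^2.
   Pairing the [(i,k)] and [(k,i)] terms, the gaps bound this from below by
   [2 c0 sum_i (1 - W_ii^2)] with [c0 = 1/(4 eta)], up to an error of order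
   [d_F(X,Q) sum_i (1 - W_ii^2)]: near [Q], [W] is close to a diagonal sign
   matrix, so its off-diagonal part is nearly skew-symmetric.  Finally
   [d_F(X,Q)^2 = sum_i 2 (1 - |W_ii|) <= 3/2 sum_i (1 - W_ii^2)]. *)

Set Implicit Arguments. Unset Strict Implicit. Unset Printing Implicit Defensive.
Import Order.TTheory GRing.Theory Num.Theory.
Local Open Scope ring_scope.

Section RealSums.
Variable R : realType.
Implicit Types x y s t wi wk tau T L ai ak lmax amax : R.

Lemma normr_le_of_sqr_le x y : 0 <= y -> x ^+ 2 <= y ^+ 2 -> `|x| <= y.
Proof. by move=> y0; rewrite -real_normK ?num_real // ler_sqr ?nnegrE. Qed.

Lemma ler_sum_term (I : finType) (F : I -> R) (j : I) :
  (forall i, 0 <= F i) -> F j <= \sum_i F i.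
Proof. by move=> F0; rewrite (bigD1 j) //= lerDl sumr_ge0. Qed.

Lemma normr_sum_mul_le (I : finType) (P : pred I) (f g : I -> R) :
  `|\sum_(m | P m) f m * g m| <=
    (\sum_(m | P m) f m ^+ 2 + \sum_(m | P m) g m ^+ 2) / 2.
Proof.
have sqD m : (f m + g m) ^+ 2 = f m ^+ 2 + g m ^+ 2 + 2 * (f m * g m) by ring.
have sqB m : (f m - g m) ^+ 2 = f m ^+ 2 + g m ^+ 2 - 2 * (f m * g m) by ring.
have sumD : 0 <= \sum_(m | P m) f m ^+ 2 + \sum_(m | P m) g m ^+ 2
                  + 2 * \sum_(m | P m) f m * g m.
  rewrite mulr_sumr -!big_split; apply: sumr_ge0 => m _ /=.
  by rewrite -sqD sqr_ge0.
have sumB : 0 <= \sum_(m | P m) f m ^+ 2 + \sum_(m | P m) g m ^+ 2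
                  - 2 * \sum_(m | P m) f m * g m.
  rewrite mulr_sumr -big_split -sumrB; apply: sumr_ge0 => m _ /=.
  by rewrite -sqB sqr_ge0.
by rewrite ler_norml; apply/andP; split; lra.
Qed.

Lemma sqr_sub_ge_of_near_skew s t wi wk tau T :
  wi ^+ 2 <= 1 -> wk ^+ 2 <= 1 -> `|wk * s + wi * t| <= T ->
  s ^+ 2 <= tau ^+ 2 -> t ^+ 2 <= tau ^+ 2 -> 1 - wi ^+ 2 <= tau ^+ 2 ->
  t ^+ 2 <= T -> 0 <= tau <= 1 ->
  - (3 * tau * T) <= s ^+ 2 - t ^+ 2.
Proof.
move=> wi1 wk1 skew s_tau t_tau wi_tau tT /andP[tau0 tau1].
have T0 : 0 <= T := le_trans (normr_ge0 _) skew.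
have [abs_s abs_t] := (normr_le_of_sqr_le tau0 s_tau, normr_le_of_sqr_le tau0 t_tau).
have abs_wi : `|wi| <= 1 by apply: normr_le_of_sqr_le; rewrite ?expr1n.
have abs_wk : `|wk| <= 1 by apply: normr_le_of_sqr_le; rewrite ?expr1n.
have anti : `|wk * s - wi * t| <= 2 * tau.
  apply: le_trans (ler_normB _ _) _; rewrite !normrM.
  have : `|wk| * `|s| <= tau by rewrite -[tau]mul1r ler_pM.
  have : `|wi| * `|t| <= tau by rewrite -[tau]mul1r ler_pM.
  lra.
have prod : - (2 * tau * T) <= (wk * s - wi * t) * (wk * s + wi * t).
  have : `|(wk * s - wi * t) * (wk * s + wi * t)| <= 2 * tau * T.
    by rewrite normrM ler_pM.
  by rewrite ler_norml => /andP[].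
have rest_s : 0 <= (1 - wk ^+ 2) * s ^+ 2 by rewrite mulr_ge0 ?subr_ge0 ?sqr_ge0.
have rest_t : (1 - wi ^+ 2) * t ^+ 2 <= tau * T.
  have : (1 - wi ^+ 2) * t ^+ 2 <= tau ^+ 2 * T by rewrite ler_pM ?subr_ge0 ?sqr_ge0.
  have : tau ^+ 2 * T <= tau * T by rewrite ler_wpM2r // expr2 ler_piMl.
  lra.
have -> : s ^+ 2 - t ^+ 2 = (wk * s - wi * t) * (wk * s + wi * t)
   + (1 - wk ^+ 2) * s ^+ 2 - (1 - wi ^+ 2) * t ^+ 2 by ring.
lra.
Qed.

Lemma pair_gap_ge L ai ak s t wi wk tau T (c0 : R) lmax amax :
  0 <= L <= lmax -> 0 <= ai <= amax -> 0 <= ak <= amax ->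
  4 * c0 <= L * (ai - ak) ->
  wi ^+ 2 <= 1 -> wk ^+ 2 <= 1 -> `|wk * s + wi * t| <= T ->
  s ^+ 2 <= tau ^+ 2 -> t ^+ 2 <= tau ^+ 2 -> 1 - wi ^+ 2 <= tau ^+ 2 ->
  t ^+ 2 <= T -> 0 <= tau <= 1 ->
  2 * c0 * (s ^+ 2 + t ^+ 2) - 3 * lmax * amax * tau * T
    <= L * (ai * s ^+ 2 - ak * t ^+ 2).
Proof.
move=> /andP[L0 Lmax] /andP[ai0 aimax] /andP[ak0 akmax] gap wi1 wk1 skew
  s_tau t_tau wi_tau tT tau01.
have sq_sub := sqr_sub_ge_of_near_skew wi1 wk1 skew s_tau t_tau wi_tau tT tau01.
case/andP: tau01 => tau0 _; have T0 : 0 <= T := le_trans (normr_ge0 _) skew.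
have sq_add : 0 <= s ^+ 2 + t ^+ 2 by rewrite addr_ge0 ?sqr_ge0.
have -> : L * (ai * s ^+ 2 - ak * t ^+ 2) =
  L * (ai - ak) / 2 * (s ^+ 2 + t ^+ 2) + L * (ai + ak) / 2 * (s ^+ 2 - t ^+ 2).
  by field.
have main : 2 * c0 * (s ^+ 2 + t ^+ 2) <= L * (ai - ak) / 2 * (s ^+ 2 + t ^+ 2).
  by rewrite ler_wpM2r //; lra.
have weight : 0 <= L * (ai + ak) / 2 <= lmax * amax.
  apply/andP; split; first by rewrite divr_ge0 ?mulr_ge0 //; lra.
  by rewrite -mulrA ler_pM //; lra.
have err0 : 0 <= 3 * tau * T by rewrite !mulr_ge0.
have err : - (lmax * amax * (3 * tau * T)) <= L * (ai + ak) / 2 * (s ^+ 2 - t ^+ 2).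
  case/andP: weight => w0 wmax.
  apply: le_trans (_ : L * (ai + ak) / 2 * - (3 * tau * T) <= _).
    by rewrite !mulrN lerN2 ler_wpM2r.
  by rewrite ler_wpM2l.
lra.
Qed.

Lemma sum_pair (I : finType) (F : I -> R) (i k : I) : i != k ->
  (forall m, m != i -> m != k -> F m = 0) -> \sum_m F m = F i + F k.
Proof.
move=> ik F0; rewrite (bigD1 i) //= (bigD1 k) 1?eq_sym //= big1 ?addr0 //.
by move=> m /andP[mi mk]; apply: F0.
Qed.

Lemma sum2_add_swap (I : finType) (F : I -> I -> R) :
  \sum_i \sum_k (F i k + F k i) = 2 * \sum_i \sum_k F i k.
Proof.
rewrite (eq_bigr _ (fun i _ => big_split _ _ _ _ _)) big_split /= exchange_big.
by rewrite [in RHS]mulr_natl mulr2n.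
Qed.

End RealSums.

Section ColumnOrthonormal.
Variables (R : realType) (K d : nat) (W : 'M[R]_K) (V : 'M[R]_(d, K)).
Hypothesis WV_orthonormal : W^T *m W + V^T *m V = 1%:M.

Local Notation colV i := (\sum_l V l i ^+ 2).
Local Notation defect i := (1 - W i i ^+ 2).

Lemma col_dot i j :
  \sum_m W m i * W m j + \sum_l V l i * V l j = (i == j)%:R.
Proof.
have /matrixP/(_ i j) := WV_orthonormal; rewrite !mxE => <-.
by congr (_ + _); apply: eq_bigr => m _; rewrite !mxE.
Qed.

Lemma col_norm i : \sum_m W m i ^+ 2 + colV i = 1.
Proof.
have := col_dot i i; rewrite eqxx /= mulr1n => <-.
by congr (_ + _); apply: eq_bigr => m _; rewrite expr2.
Qed.

Lemma defect_decomp i : defect i = \sum_(m | m != i) W m i ^+ 2 + colV i.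
Proof. by have := col_norm i; rewrite (bigD1 i) //=; lra. Qed.

Lemma offdiag_sqr_le_defect m i : m != i -> W m i ^+ 2 <= defect i.
Proof.
move=> mi; rewrite defect_decomp (bigD1 m) //= -addrA lerDl.
by rewrite addr_ge0 ?sumr_ge0 // => *; rewrite sqr_ge0.
Qed.

Lemma colV_le_defect i : colV i <= defect i.
Proof. by rewrite defect_decomp lerDr sumr_ge0 // => *; rewrite sqr_ge0. Qed.

Lemma defect_ge0 i : 0 <= defect i.
Proof. by apply: le_trans (colV_le_defect i); rewrite sumr_ge0 // => *; rewrite sqr_ge0. Qed.

Lemma diag_sqr_le1 i : W i i ^+ 2 <= 1.
Proof. by rewrite -subr_ge0 defect_ge0. Qed.

(* Column [i] of [col_mx W V] is orthogonal to column [k]. *)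
Lemma near_skew i k : i != k ->
  `|W k k * W k i + W i i * W i k| <= (defect i + defect k) / 2.
Proof.
move=> ik; have ki : k != i by rewrite eq_sym.
have := col_dot i k; rewrite (negbTE ik) mulr0n (bigD1 i) //= (bigD1 k) //=.
set rest := \sum_(m | _) _; move=> orth.
have -> : W k k * W k i + W i i * W i k = - (rest + \sum_l V l i * V l k).
  by rewrite -[LHS]subr0 -[X in _ - X]orth; ring.
rewrite normrN; apply: le_trans (ler_normD _ _) _.
have rest_le := normr_sum_mul_le (fun m => (m != i) && (m != k))
  (fun m => W m i) (fun m => W m k).
have V_le := normr_sum_mul_le xpredT (fun l => V l i) (fun l => V l k).
have off_i : \sum_(m | (m != i) && (m != k)) W m i ^+ 2
             <= \sum_(m | m != i) W m i ^+ 2.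
  by rewrite [leRHS](bigD1 k) //= lerDr sqr_ge0.
have off_k : \sum_(m | (m != i) && (m != k)) W m k ^+ 2
             <= \sum_(m | m != k) W m k ^+ 2.
  rewrite [leRHS](bigD1 i) //= [X in _ <= _ + X](eq_bigl (fun m => (m != i) && (m != k))).
    by rewrite lerDr sqr_ge0.
  by move=> m; rewrite andbC.
rewrite /rest; move: rest_le V_le; rewrite !defect_decomp /=; lra.
Qed.

Section Gap.
Variables (lam a : 'I_K -> R) (c0 tau lmax amax : R).
Hypotheses (lam_noninc : forall i j : 'I_K, (i < j)%N -> lam j <= lam i)
  (lam_ge0 : forall i, 0 <= lam i) (lam_le : forall i, lam i <= lmax)
  (a_ge0 : forall i, 0 <= a i) (a_le : forall i, a i <= amax)
  (a_lam_ge : forall i, 2 * c0 <= a i * lam i)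
  (pair_gap : forall i j : 'I_K, (i < j)%N -> 4 * c0 <= (lam i - lam j) * (a i - a j))
  (tau_ge0 : 0 <= tau) (tau_le : tau <= 1 / 2)
  (defect_le : forall i, defect i <= tau ^+ 2).

Lemma gap_decomp :
  \sum_i a i * lam i - \sum_i a i * \sum_k lam k * W k i ^+ 2 =
  \sum_i a i * lam i * colV i + \sum_i \sum_k a i * (lam i - lam k) * W k i ^+ 2.
Proof.
rewrite -sumrB -big_split; apply: eq_bigr => i _ /=.
have -> : \sum_k a i * (lam i - lam k) * W k i ^+ 2 =
          a i * lam i * \sum_k W k i ^+ 2 - a i * \sum_k lam k * W k i ^+ 2.
  by rewrite !mulr_sumr -sumrB; apply: eq_bigr => k _; ring.
by rewrite -[a i * lam i in LHS]mulr1 -(col_norm i); ring.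
Qed.

Local Notation G i k := (a i * (lam i - lam k) * W k i ^+ 2).
Local Notation offsq i k := ((k != i)%:R * W k i ^+ 2).
Local Notation Ts := (\sum_j defect j).
Local Notation err := (3 * lmax * amax * tau * Ts).

Lemma pair_term_ge i k : 2 * c0 * (offsq i k + offsq k i) - err <= G i k + G k i.
Proof.
have lmax0 : 0 <= lmax by apply: le_trans (lam_le i).
have amax0 : 0 <= amax by apply: le_trans (a_le i).
have Ts0 : 0 <= Ts by rewrite sumr_ge0 // => j _; apply: defect_ge0.
have err0 : 0 <= err by rewrite !mulr_ge0.
have [<-|ik] := eqVneq k i; first by rewrite /= mulr0n !mul0r !subrr; lra.
rewrite /= !mulr1n !mul1r.
wlog lt_ik : i k ik / (i < k)%N => [hwlog|].
  case: (ltngtP i k) => [lt_ik|lt_ki|/val_inj eq_ik]; first exact: hwlog.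
    by rewrite [X in 2 * c0 * X]addrC [leRHS]addrC hwlog // eq_sym.
  by rewrite eq_ik eqxx in ik.
have ki : i != k by rewrite eq_sym.
have Ts_ge j : defect j <= Ts by apply: ler_sum_term; apply: defect_ge0.
have -> : G i k + G k i = (lam i - lam k) * (a i * W k i ^+ 2 - a k * W i k ^+ 2).
  by ring.
apply: (@pair_gap_ge R _ _ _ _ _ (W i i) (W k k)).
- by rewrite subr_ge0 lam_noninc //= lerBlDr (le_trans (lam_le i)) ?lerDl.
- by rewrite a_ge0 a_le.
- by rewrite a_ge0 a_le.
- exact: pair_gap.
- exact: diag_sqr_le1.
- exact: diag_sqr_le1.
- apply: le_trans (near_skew ki) _.
  by have := Ts_ge i; have := Ts_ge k; lra.
- exact: le_trans (offdiag_sqr_le_defect ik) (defect_le i).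
- exact: le_trans (offdiag_sqr_le_defect ki) (defect_le k).
- exact: defect_le.
- exact: le_trans (offdiag_sqr_le_defect ki) (Ts_ge k).
- by rewrite tau_ge0 (le_trans tau_le) //; lra.
Qed.

Lemma sum_offsq : \sum_i \sum_k offsq i k = Ts - \sum_i colV i.
Proof.
rewrite -sumrB; apply: eq_bigr => i _.
rewrite defect_decomp addrK [RHS]big_mkcond; apply: eq_bigr => k _.
by case: (k != i); rewrite ?mul1r ?mul0r.
Qed.

Lemma gap_ge : 0 <= c0 -> 3 * (K * K)%:R * lmax * amax * tau <= c0 ->
  c0 * \sum_i 2 * (1 - `|W i i|)
    <= \sum_i a i * lam i - \sum_i a i * \sum_k lam k * W k i ^+ 2.
Proof.
move=> c0_ge0 tau_small.
have Ts0 : 0 <= Ts by rewrite sumr_ge0 // => j _; apply: defect_ge0.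
have colV0 i : 0 <= colV i by rewrite sumr_ge0 // => l _; apply: sqr_ge0.
rewrite gap_decomp.
have pairs : \sum_i \sum_k (2 * c0 * (offsq i k + offsq k i) - err)
             <= \sum_i \sum_k (G i k + G k i).
  by apply: ler_sum => i _; apply: ler_sum => k _; apply: pair_term_ge.
have count : \sum_i \sum_k (2 * c0 * (offsq i k + offsq k i) - err) =
             2 * c0 * \sum_i \sum_k (offsq i k + offsq k i) - (K * K)%:R * err.
  under eq_bigr do rewrite sumrB sumr_const card_ord -mulr_sumr.
  by rewrite sumrB sumr_const card_ord -mulr_sumr -mulrnA [(K * K)%:R * _]mulr_natl.
rewrite count !sum2_add_swap sum_offsq in pairs.
have colV_part : 2 * c0 * \sum_i colV i <= \sum_i a i * lam i * colV i.
  by rewrite mulr_sumr; apply: ler_sum => i _; rewrite ler_wpM2r.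
have err_le : (K * K)%:R * err <= c0 * Ts.
  have -> : (K * K)%:R * err = 3 * (K * K)%:R * lmax * amax * tau * Ts by ring.
  by rewrite ler_wpM2r.
have diag_part : c0 * \sum_i 2 * (1 - `|W i i|) <= c0 * (3 / 2 * Ts).
  rewrite ler_wpM2l // mulr_sumr; apply: ler_sum => i _.
  have w1 : `|W i i| <= 1 by rewrite normr_le_of_sqr_le ?expr1n ?diag_sqr_le1.
  have tau2 : tau ^+ 2 <= 1 / 4.
    by rewrite expr2; have := ler_pM tau_ge0 tau_ge0 tau_le tau_le; lra.
  have wtau := defect_le i; rewrite -real_normK ?num_real // in wtau *.
  have w3 : 1 / 3 <= `|W i i| by have := normr_ge0 (W i i); nra.
  nra.
lra.
Qed.

End Gap.
End ColumnOrthonormal.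

Section Frobenius.
Variable R : realType.

Lemma frob_ge0 m n (A : 'M[R]_(m, n)) : 0 <= frob A.
Proof. exact: sqrtr_ge0. Qed.

Lemma frob_sqr m n (A : 'M[R]_(m, n)) : frob A ^+ 2 = \sum_i \sum_j A i j ^+ 2.
Proof. by rewrite sqr_sqrtr // !sumr_ge0 // => i _; rewrite sumr_ge0 // => j _; apply: sqr_ge0. Qed.

Lemma sum_sqr_tr m n (A : 'M[R]_(m, n)) : \sum_i \sum_j A i j ^+ 2 = \tr (A^T *m A).
Proof.
rewrite exchange_big; apply: eq_bigr => j _; rewrite !mxE.
by apply: eq_bigr => i _; rewrite !mxE expr2.
Qed.

Lemma frob_sqr_tr m n (A : 'M[R]_(m, n)) : frob A ^+ 2 = \tr (A^T *m A).
Proof. by rewrite frob_sqr sum_sqr_tr. Qed.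

Lemma frob_isometry p m n (B : 'M[R]_(p, m)) (A : 'M[R]_(m, n)) :
  B^T *m B = 1%:M -> frob (B *m A) = frob A.
Proof. by move=> isoB; rewrite /frob !sum_sqr_tr trmx_mul -mulmxA (mulmxA B^T) isoB mul1mx. Qed.

Lemma frob_col_mx_sqr m1 m2 n (A : 'M[R]_(m1, n)) (B : 'M[R]_(m2, n)) :
  frob (col_mx A B) ^+ 2 = frob A ^+ 2 + frob B ^+ 2.
Proof. by rewrite !frob_sqr_tr tr_col_mx mul_row_col mxtraceD. Qed.

Lemma frob_diag_sqr n (v : 'rV[R]_n) : frob (diag_mx v) ^+ 2 = \sum_j v 0 j ^+ 2.
Proof.
rewrite frob_sqr_tr tr_diag_mx mulmx_diag mxtrace_diag.
by apply: eq_bigr => j _; rewrite mxE expr2.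
Qed.

Lemma frob_row_sqr n (r : 'rV[R]_n) : frob r ^+ 2 = \sum_j r 0 j ^+ 2.
Proof. by rewrite frob_sqr big_ord1. Qed.

Lemma frob0 m n : frob (0 : 'M[R]_(m, n)) = 0.
Proof. by rewrite /frob big1 ?sqrtr0 // => i _; rewrite big1 // => j _; rewrite mxE expr0n. Qed.

Lemma frobN m n (A : 'M[R]_(m, n)) : frob (- A) = frob A.
Proof.
rewrite /frob; congr Num.sqrt.
by apply: eq_bigr => i _; apply: eq_bigr => j _; rewrite mxE sqrrN.
Qed.

End Frobenius.

Section Stiefel.
Variables (R : realType) (d K : nat).
Implicit Types (Q X : 'M[R]_(d, K)).

Lemma col_mx_gram m n (M : 'M[R]_(m, K)) (r : 'M[R]_(n, K)) :
  (col_mx M r)^T *m col_mx M r = M^T *m M + r^T *m r.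
Proof. by rewrite tr_col_mx mul_row_col. Qed.

Lemma stiefel_mul n (B : 'M[R]_(d, n)) (Y : 'M[R]_(n, K)) :
  stiefel B -> stiefel Y -> stiefel (B *m Y).
Proof. by rewrite /stiefel trmx_mul -mulmxA (mulmxA B^T) => -> ; rewrite mul1mx. Qed.

Lemma stiefel_row_mx Q (u : 'cV[R]_d) :
  stiefel Q -> Q^T *m u = 0 -> u^T *m u = 1%:M -> stiefel (row_mx Q u).
Proof.
move=> oQ Qu uu; have uQ : u^T *m Q = 0 by rewrite -[u^T *m Q]trmxK trmx_mul trmxK Qu trmx0.
by rewrite /stiefel tr_row_mx mul_col_row oQ Qu uQ uu -scalar_mx_block.
Qed.

Lemma exists_unit_orthogonal Q : (K < d)%N ->
  exists u : 'cV[R]_d, Q^T *m u = 0 /\ u^T *m u = 1%:M.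
Proof.
move=> Kd; have : kermx Q != 0.
  by rewrite -mxrank_eq0 mxrank_ker subn_eq0 -ltnNge (leq_ltn_trans (rank_leq_col Q)).
case/matrix0Pn => i [j nz]; set w := (row i (kermx Q))^T.
have Qw : Q^T *m w = 0 by rewrite /w -trmx_mul -row_mul mulmx_ker row0 trmx0.
have ww : w^T *m w = (frob w ^+ 2)%:M.
  by apply/matrixP => p q; rewrite !ord1 frob_sqr_tr /mxtrace big_ord1 !mxE.
have w_pos : 0 < frob w ^+ 2.
  rewrite frob_sqr (bigD1 j) //= big_ord1 ltr_pwDl ?sumr_ge0 // => [|p _].
    by rewrite exprn_even_gt0 //= /w 2!mxE.
  by rewrite sumr_ge0 // => q _; apply: sqr_ge0.
exists ((frob w)^-1 *: w); split; first by rewrite -scalemxAr Qw scaler0.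
rewrite [(_ *: w)^T]linearZ /= -scalemxAl -scalemxAr ww scalerA scale_scalar_mx.
by rewrite -expr2 exprVn mulVf ?gt_eqF.
Qed.

Lemma stiefel_coord_orthonormal Q X : stiefel Q -> stiefel X ->
  (Q^T *m X)^T *m (Q^T *m X) +
  (X - Q *m (Q^T *m X))^T *m (X - Q *m (Q^T *m X)) = 1%:M.
Proof.
rewrite /stiefel => oQ oX; set W := Q^T *m X.
have XtQW : X^T *m (Q *m W) = W^T *m W by rewrite /W trmx_mul trmxK mulmxA.
have QWtX : (Q *m W)^T *m X = W^T *m W by rewrite trmx_mul -mulmxA.
have QWQW : (Q *m W)^T *m (Q *m W) = W^T *m W.
  by rewrite trmx_mul -mulmxA (mulmxA Q^T) oQ mul1mx.
rewrite [(X - _)^T]linearB /= mulmxBl !mulmxBr oX XtQW QWtX QWQW.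
by rewrite subrr subr0 addrC subrK.
Qed.
End Stiefel.

Lemma dF_ge0 (R : realType) d K (X Q : 'M[R]_(d, K)) : 0 <= dF X Q.
Proof. by apply: le_bigmin => [|q _]; apply: frob_ge0. Qed.

Section Distance.
Variables (R : realType) (d K : nat) (Q X : 'M[R]_(d, K)).
Hypotheses (oQ : stiefel Q) (oX : stiefel X).
Local Notation W := (Q^T *m X : 'M[R]_K).

Lemma coord_diag_norm_le1 k : `|W k k| <= 1.
Proof.
apply: normr_le_of_sqr_le; rewrite ?expr1n //.
by apply: diag_sqr_le1; apply: stiefel_coord_orthonormal.
Qed.

Lemma frob_sub_diag_sqr (v : 'rV[R]_K) :
  frob (X - Q *m diag_mx v) ^+ 2 = \sum_k (1 - 2 * (v 0 k * W k k) + v 0 k ^+ 2).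
Proof.
have XtQ : X^T *m Q = W^T by rewrite trmx_mul trmxK.
rewrite frob_sqr_tr [(X - _)^T]linearB /= trmx_mul tr_diag_mx mulmxBl !mulmxBr oX.
rewrite !mulmxA XtQ -(mulmxA _ Q^T Q) oQ mulmx1 mulmx_diag -(mulmxA _ Q^T X).
rewrite mul_diag_mx mul_mx_diag /mxtrace; apply: eq_bigr => k _.
by rewrite !mxE eqxx /= !mulr1n; ring.
Qed.

Lemma frob_sub_sign_sqr (q : {ffun 'I_K -> bool}) :
  frob (X - Q *m diag_mx (signvec R q)) ^+ 2 =
  \sum_k 2 * (1 - (if q k then -1 else 1) * W k k).
Proof. by rewrite frob_sub_diag_sqr; apply: eq_bigr => k _; rewrite mxE; case: (q k); ring. Qed.

(* The minimum over sign flips is attained by flipping exactly the columns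
   with [W k k < 0]. *)
Lemma dF_stiefel : dF X Q = Num.sqrt (\sum_k 2 * (1 - `|W k k|)).
Proof.
set S := \sum_k _.
have frobE q : frob (X - Q *m diag_mx (signvec R q)) =
               Num.sqrt (frob (X - Q *m diag_mx (signvec R q)) ^+ 2).
  by rewrite sqrtr_sqr ger0_norm ?frob_ge0.
have lb q : Num.sqrt S <= frob (X - Q *m diag_mx (signvec R q)).
  rewrite frobE ler_sqrt ?sqr_ge0 // frob_sub_sign_sqr.
  apply: ler_sum => k _; have := ler_norm (W k k).
  by have := ler_norm (- W k k); rewrite normrN; case: (q k); lra.
pose qneg := [ffun k => W k k < 0].
have attained : frob (X - Q *m diag_mx (signvec R qneg)) = Num.sqrt S.
  rewrite frobE frob_sub_sign_sqr; congr Num.sqrt; apply: eq_bigr => k _.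
  by rewrite ffunE; case: ltrP => [/ltr0_norm|/ger0_norm] ->; ring.
apply/le_anti/andP; split; first by rewrite -attained bigmin_le.
apply: le_bigmin => [|q _]; last exact: lb.
have signvec1 : diag_mx (signvec R [ffun _ : 'I_K => false]) = 1%:M.
  by apply/matrixP => i j; rewrite !mxE ffunE.
by have := lb [ffun _ => false]; rewrite signvec1 mulmx1.
Qed.

Lemma dF_stiefel_sqr : dF X Q ^+ 2 = \sum_k 2 * (1 - `|W k k|).
Proof.
rewrite dF_stiefel sqr_sqrtr // sumr_ge0 // => k _.
by rewrite mulr_ge0 // subr_ge0 coord_diag_norm_le1.
Qed.

Lemma coord_defect_le_dF k : 1 - W k k ^+ 2 <= dF X Q ^+ 2.
Proof.
have Wk := coord_diag_norm_le1 k; have Wk0 := normr_ge0 (W k k).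
have defect_le : 1 - W k k ^+ 2 <= 2 * (1 - `|W k k|).
  by rewrite -real_normK ?num_real //; nra.
rewrite dF_stiefel_sqr; apply: le_trans defect_le _; apply: ler_sum_term => j.
by rewrite mulr_ge0 // subr_ge0 coord_diag_norm_le1.
Qed.

End Distance.

Section Objective.
Variables (R : realType) (d K : nat) (Q : 'M[R]_(d, K)) (lam a : 'I_K -> R).
Hypothesis lam_ge0 : forall i, 0 <= lam i.

Lemma Theta_sqr : Theta lam *m Theta lam = diagA lam.
Proof.
rewrite /Theta mulmx_diag; congr diag_mx.
by apply/rowP => j; rewrite !mxE -expr2 sqr_sqrtr.
Qed.

Lemma gfun_coord X : gfun Q lam a X = \sum_i a i * \sum_k lam k * (Q^T *m X) k i ^+ 2.
Proof.
rewrite /gfun Theta_sqr -(mulmxA _ Q^T X) -[X^T *m Q]trmxK trmx_mul trmxK.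
rewrite mul_mx_diag /mxtrace; apply: eq_bigr => i _; rewrite !mxE mulrC.
by congr (_ * _); rewrite mul_mx_diag; apply: eq_bigr => k _; rewrite !mxE; ring.
Qed.

Lemma gfun_at_Q : stiefel Q -> gfun Q lam a Q = \sum_i a i * lam i.
Proof.
move=> oQ; rewrite gfun_coord oQ; apply: eq_bigr => i _; congr (_ * _).
rewrite (bigD1 i) //= big1 ?addr0 => [|k ki]; first by rewrite !mxE eqxx expr1n mulr1.
by rewrite !mxE (negbTE ki) expr0n mulr0.
Qed.

End Objective.

Section Gradient.
Variables (R : realType) (d K : nat) (Q : 'M[R]_(d, K)) (lam a : 'I_K -> R).
Hypotheses (lam_ge0 : forall i, 0 <= lam i) (oQ : stiefel Q).
Local Notation L := (diagA lam).
Local Notation A := (diagA a).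
Local Notation sym W := (A *m (W^T *m (L *m W)) + W^T *m (L *m W) *m A).

Lemma rgrad_stiefel Z : stiefel Z ->
  rgrad Q lam a Z = 2%:R *: (Q *m (L *m (Q^T *m Z *m A))) - Z *m sym (Q^T *m Z).
Proof.
move=> oZ; set W := Q^T *m Z; set H := W^T *m (L *m W); set N := Q *m (L *m (W *m A)).
have At : A^T = A by rewrite tr_diag_mx.
have egradE : egrad Q lam a Z = 2%:R *: N by rewrite /egrad Theta_sqr // /N /W !mulmxA.
have ZtN : Z^T *m N = H *m A by rewrite /N /H /W trmx_mul trmxK !mulmxA.
have Ht : H^T = H by rewrite /H trmx_mul trmxK [(L *m _)^T]trmx_mul tr_diag_mx mulmxA.
have NtZ : N^T *m Z = A *m H.
  by rewrite -[N^T *m Z]trmxK trmx_mul trmxK ZtN trmx_mul At Ht.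
have inner : 2%:R *: N - Z *m (2%:R *: N)^T *m Z = 2%:R *: (N - Z *m (A *m H)).
  by rewrite linearZ /= -scalemxAr -scalemxAl -mulmxA NtZ scalerBr.
have proj : Z^T *m (N - Z *m (A *m H)) = H *m A - A *m H.
  by rewrite mulmxBr ZtN (mulmxA Z^T) oZ mul1mx.
rewrite /rgrad egradE inner mulmxBl mul1mx -scalemxAl -scalemxAr scalerA mulVf ?pnatr_eq0 //.
rewrite scale1r -mulmxA proj mulmxBr mulmxDr scalerBr.
set P := Z *m (A *m H); set S := Z *m (H *m A).
by rewrite !scaler_nat !mulr2n opprB !opprD !addrA subrK.
Qed.

Variable u : 'cV[R]_d.
Hypotheses (Qu : Q^T *m u = 0) (uu : u^T *m u = 1%:M).

Section TestPoint.
Variables (M : 'M[R]_K) (r : 'rV[R]_K).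
Hypothesis oMr : M^T *m M + r^T *m r = 1%:M.

Lemma test_point_stiefel : stiefel (Q *m M + u *m r).
Proof.
rewrite -mul_row_col; apply: stiefel_mul; first exact: stiefel_row_mx.
by rewrite /stiefel col_mx_gram.
Qed.

Lemma test_point_coord : Q^T *m (Q *m M + u *m r) = M.
Proof. by rewrite mulmxDr !mulmxA oQ Qu mul1mx mul0mx addr0. Qed.

Lemma frob_rgrad_test_point :
  frob (rgrad Q lam a (Q *m M + u *m r)) ^+ 2 =
  frob (2%:R *: (L *m (M *m A)) - M *m sym M) ^+ 2 + frob (r *m sym M) ^+ 2.
Proof.
rewrite rgrad_stiefel ?test_point_coord //; last exact: test_point_stiefel.
have -> : 2%:R *: (Q *m (L *m (M *m A))) - (Q *m M + u *m r) *m sym M =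
    row_mx Q u *m col_mx (2%:R *: (L *m (M *m A)) - M *m sym M) (- (r *m sym M)).
  by rewrite mul_row_col mulmxBr mulmxDl scalemxAr mulmxN !mulmxA opprD addrA.
by rewrite frob_isometry ?stiefel_row_mx // frob_col_mx_sqr frobN.
Qed.

End TestPoint.
End Gradient.

Section Givens.
Variables (R : realType) (K : nat) (i k : 'I_K) (c s : R).
Hypothesis ik : i != k.

Definition givens : 'M[R]_K :=
  \matrix_(m, p) if p == i then c * (m == i)%:R + s * (m == k)%:R
                 else if p == k then c * (m == k)%:R - s * (m == i)%:R
                 else (m == p)%:R.

Local Notation G := givens.

Let ki : k != i. Proof. by rewrite eq_sym. Qed.
Local Notation in_plane p := ((p == i) || (p == k)).

Lemma givens_ii : G i i = c.
Proof. by rewrite mxE !eqxx ?(negbTE ik) ?(negbTE ki) /=; ring. Qed.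

Lemma givens_ki : G k i = s.
Proof. by rewrite mxE !eqxx ?(negbTE ik) ?(negbTE ki) /=; ring. Qed.

Lemma givens_ik : G i k = - s.
Proof. by rewrite mxE !eqxx ?(negbTE ik) ?(negbTE ki) /=; ring. Qed.

Lemma givens_kk : G k k = c.
Proof. by rewrite mxE !eqxx ?(negbTE ik) ?(negbTE ki) /=; ring. Qed.

Lemma givens_out_col m p : ~~ in_plane p -> G m p = (m == p)%:R.
Proof. by rewrite negb_or mxE => /andP[/negbTE -> /negbTE ->]. Qed.

Lemma givens_out_row m p : ~~ in_plane m -> G m p = (m == p)%:R.
Proof.
rewrite negb_or => /andP[mi mk]; rewrite mxE (negbTE mi) (negbTE mk) /= !mulr0 subr0 addr0.
by case: eqP => [->|_]; [rewrite (negbTE mi)|case: eqP => [->|//]; rewrite (negbTE mk)].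
Qed.

Lemma givens_gram (w : 'I_K -> R) p q :
  (G^T *m (diagA w *m G)) p q =
  if in_plane p && in_plane q then G i p * (w i * G i q) + G k p * (w k * G k q)
  else w p * (p == q)%:R.
Proof.
have -> : (G^T *m (diagA w *m G)) p q = \sum_m G m p * (w m * G m q).
  by rewrite mul_diag_mx !mxE; apply: eq_bigr => m _; rewrite !mxE.
have [p_in|p_out] /= := boolP (in_plane p).
  have [q_in|q_out] /= := boolP (in_plane q).
    apply: sum_pair => // m mi mk.
    rewrite givens_out_row ?negb_or ?mi ?mk //.
    by case/orP: p_in => /eqP ->; rewrite ?(negbTE mi) ?(negbTE mk) mul0r.
  rewrite (bigD1 q) //= big1 ?addr0 => [|m mq]; last first.
    by rewrite (givens_out_col m q_out) (negbTE mq) !mulr0.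
  rewrite (givens_out_col q q_out) (givens_out_row p q_out) eqxx mulr1.
  have qp : (q == p) = false by apply: contraNF q_out => /eqP ->.
  by rewrite qp eq_sym qp /= mulr0n mul0r mulr0.
rewrite (bigD1 p) //= big1 ?addr0 => [|m mp]; last first.
  by rewrite (givens_out_col m p_out) (negbTE mp) mul0r.
by rewrite (givens_out_col p p_out) (givens_out_row q p_out) eqxx mul1r.
Qed.

Lemma givens_orthogonal : c ^+ 2 + s ^+ 2 = 1 -> G^T *m G = 1%:M.
Proof.
move=> cs1; have diag1 : diagA (fun=> 1) = 1%:M :> 'M[R]_K.
  by apply/matrixP => p q; rewrite !mxE.
have -> : G^T *m G = G^T *m (diagA (fun=> 1) *m G) by rewrite diag1 mul1mx.
apply/matrixP => p q; rewrite givens_gram [RHS]mxE.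
case: ifP => [/andP[p_in q_in]|_]; last by rewrite /= mul1r.
case/orP: p_in => /eqP->; case/orP: q_in => /eqP->;
  rewrite ?givens_ii ?givens_ki ?givens_ik ?givens_kk ?eqxx ?(negbTE ik) ?(negbTE ki) /=;
  by rewrite ?mulr1n ?mulr0n !mul1r -?cs1; ring.
Qed.

(* Conjugating a diagonal matrix by the rotation creates off-diagonal entries
   only at [(i, k)] and [(k, i)]. *)
Lemma frob_givens_commutator_sqr (w b : 'I_K -> R) :
  let H := G^T *m (diagA w *m G) in
  frob (H *m diagA b - diagA b *m H) ^+ 2 = 2 * (c * s * (w i - w k) * (b i - b k)) ^+ 2.
Proof.
move=> H; have entry p q : (H *m diagA b - diagA b *m H) p q = H p q * (b q - b p).
  by rewrite mul_mx_diag mul_diag_mx !mxE; ring.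
have H_out p q : ~~ (in_plane p && in_plane q) -> H p q = w p * (p == q)%:R.
  by rewrite /H givens_gram => /negbTE ->.
have H_ik : H i k = c * s * (w k - w i).
  by rewrite /H givens_gram !eqxx orbT givens_ii givens_ki givens_ik givens_kk; ring.
have H_ki : H k i = c * s * (w k - w i).
  by rewrite /H givens_gram !eqxx orbT givens_ii givens_ki givens_ik givens_kk; ring.
rewrite frob_sqr (sum_pair ik) => [|p pi pk]; last first.
  apply: big1 => q _; rewrite entry H_out ?negb_and ?negb_or ?pi ?pk //.
  by case: (eqVneq p q) => [->|_]; rewrite ?subrr ?mulr0 ?mulr0n ?mul0r ?mulr0 expr0n.
rewrite !(sum_pair ik) => [|q qi qk|q qi qk]; first by rewrite !entry H_ik H_ki; ring.
- by rewrite entry H_out ?negb_and ?negb_or ?qi ?qk ?orbT // eq_sym (negbTE qk) mulr0 mul0r expr0n.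
- by rewrite entry H_out ?negb_and ?negb_or ?qi ?qk ?orbT // eq_sym (negbTE qi) mulr0 mul0r expr0n.
Qed.

End Givens.

Section TestPoints.
Variables (R : realType) (d K : nat) (Q : 'M[R]_(d, K)) (lam a : 'I_K -> R).
Variables (u : 'cV[R]_d) (delta3 eta c : R).
Hypotheses (lam_ge0 : forall i, 0 <= lam i) (oQ : stiefel Q).
Hypotheses (Qu : Q^T *m u = 0) (uu : u^T *m u = 1%:M).
Hypotheses (delta3_ge0 : 0 <= delta3) (eta_gt0 : 0 < eta).
Hypothesis error_bound : forall X : 'M[R]_(d, K), stiefel X -> dF X Q <= delta3 ->
  dF X Q <= eta * frob (rgrad Q lam a X).
Hypotheses (c_gt0 : 0 < c) (c_lt1 : c < 1) (c_close : 4 * (1 - c) <= delta3 ^+ 2).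
Local Notation s := (Num.sqrt (1 - c ^+ 2)).
Local Notation L := (diagA lam).
Local Notation A := (diagA a).

Lemma error_bound_test Z D q : stiefel Z -> dF Z Q ^+ 2 = D -> 0 < D ->
  D <= delta3 ^+ 2 -> frob (rgrad Q lam a Z) ^+ 2 <= q ^+ 2 * D ->
  1 <= eta * `|q|.
Proof.
move=> oZ dFZ D_gt0 D_le grad_le.
have dF0 := dF_ge0 Z Q.
have dF_pos : 0 < dF Z Q.
  by rewrite lt0r dF0 andbT; apply: contraTneq D_gt0 => dF_eq0; rewrite -dFZ dF_eq0 expr0n ltxx.
have dF_le : dF Z Q <= delta3 by rewrite -ler_sqr ?nnegrE // dFZ.
have grad_le' : frob (rgrad Q lam a Z) <= `|q| * dF Z Q.
  by rewrite -ler_sqr ?nnegrE ?mulr_ge0 ?frob_ge0 // exprMn real_normK ?num_real // dFZ.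
have dF_grad := error_bound oZ dF_le.
have eta_grad := ler_wpM2l (ltW eta_gt0) grad_le'.
by rewrite -(ler_pM2r dF_pos); lra.
Qed.

Lemma sqr_s : s ^+ 2 = 1 - c ^+ 2.
Proof. by rewrite sqr_sqrtr // subr_ge0 expr_le1 ?ltW. Qed.

Lemma sqr_c_add_sqr_s : c ^+ 2 + s ^+ 2 = 1.
Proof. by rewrite sqr_s addrC subrK. Qed.

Lemma sqr_cs_le : (c * s) ^+ 2 <= 2 * (1 - c).
Proof.
have c_sqr : c ^+ 2 <= 1 by rewrite expr_le1 ?ltW.
have cube : c ^+ 2 * (1 + c) <= 2.
  have : c ^+ 2 * c <= 1 * 1 by apply: ler_pM; rewrite ?sqr_ge0 // ltW.
  by rewrite mulrDr mulr1; lra.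
rewrite exprMn sqr_s.
have -> : c ^+ 2 * (1 - c ^+ 2) = (1 - c) * (c ^+ 2 * (1 + c)) by ring.
by rewrite [2 * _]mulrC ler_wpM2l // subr_ge0 ltW.
Qed.

Local Notation sym W := (A *m (W^T *m (L *m W)) + W^T *m (L *m W) *m A).

(* Rotate column [i] of [Q] towards [u] by the angle with cosine [c]. *)
Lemma perp_rotation_test i : 1 <= eta * `|2 * (a i * lam i)|.
Proof.
pose mv : 'rV[R]_K := \row_l (if l == i then c else 1).
pose r : 'rV[R]_K := \row_l (if l == i then s else 0).
pose M := diag_mx mv.
have oMr : M^T *m M + r^T *m r = 1%:M.
  rewrite /M tr_diag_mx mulmx_diag; apply/matrixP => p q; rewrite !mxE big_ord1 !mxE.
  have [<-|pq] := eqVneq p q.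
    by rewrite !mulr1n; case: (p == i); rewrite ?mulr1 ?mulr0 ?addr0 // -!expr2 sqr_s addrC subrK.
  rewrite !mulr0n add0r; case: (eqVneq p i) => [pi|_]; last by rewrite mul0r.
  by rewrite -pi eq_sym (negbTE pq) mulr0.
have symM : sym M = diag_mx (\row_l (2 * (a l * lam l) * mv 0 l ^+ 2)).
  rewrite /M /diagA tr_diag_mx !mulmx_diag; apply/matrixP => p q; rewrite !mxE.
  by case: (p == q); rewrite ?mulr0n ?mulr1n ?addr0 //; ring.
have dFZ : dF (Q *m M + u *m r) Q ^+ 2 = 2 * (1 - c).
  rewrite dF_stiefel_sqr //; last exact: test_point_stiefel.
  rewrite (test_point_coord oQ Qu M r) (bigD1 i) //= big1.
    by rewrite addr0 !mxE eqxx mulr1n ger0_norm ?ltW.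
  by move=> k ki; rewrite !mxE (negbTE ki) eqxx mulr1n normr1 subrr mulr0.
have gradZ : frob (rgrad Q lam a (Q *m M + u *m r)) ^+ 2 =
             (2 * (a i * lam i)) ^+ 2 * (c * s) ^+ 2.
  rewrite (frob_rgrad_test_point a lam_ge0 oQ Qu uu oMr) symM.
  have -> : 2%:R *: (L *m (M *m A)) - M *m diag_mx (\row_l (2 * (a l * lam l) * mv 0 l ^+ 2))
      = diag_mx (\row_l (2 * (a l * lam l) * mv 0 l * (1 - mv 0 l ^+ 2))).
    rewrite /M /diagA !mulmx_diag; apply/matrixP => p q; rewrite !mxE.
    by case: (p == q); rewrite /= ?mulr0n ?mulr1n; ring.
  rewrite frob_diag_sqr mul_mx_diag frob_row_sqr -big_split /= (bigD1 i) //= big1.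
    rewrite !mxE eqxx addr0 -{1}sqr_s.
    transitivity ((2 * (a i * lam i)) ^+ 2 * (c * s) ^+ 2 * (c ^+ 2 + s ^+ 2)); first ring.
    by rewrite sqr_c_add_sqr_s mulr1.
  by move=> k ki; rewrite !mxE (negbTE ki); ring.
apply: (error_bound_test (test_point_stiefel oQ Qu uu oMr) dFZ).
- by rewrite mulr_gt0 // subr_gt0.
- by have := c_lt1; have := c_close; lra.
- by rewrite gradZ ler_wpM2l ?sqr_ge0 ?sqr_cs_le.
Qed.

(* Rotate columns [i] and [k] of [Q] into each other. *)
Lemma plane_rotation_test i k : i != k -> 1 <= eta * `|(lam i - lam k) * (a i - a k)|.
Proof.
move=> ik; pose G := givens i k c s.
have oG : G^T *m G = 1%:M := givens_orthogonal ik sqr_c_add_sqr_s.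
have oGr : G^T *m G + (0 : 'rV[R]_K)^T *m 0 = 1%:M by rewrite mulmx0 addr0.
have dFZ : dF (Q *m G + u *m 0) Q ^+ 2 = 4 * (1 - c).
  rewrite dF_stiefel_sqr //; last exact: test_point_stiefel.
  rewrite (test_point_coord oQ Qu G 0) (sum_pair ik) => [|m mi mk].
    by rewrite (givens_ii c s ik) (givens_kk c s ik) ger0_norm ?ltW //; ring.
  by rewrite (givens_out_col c s m) ?negb_or ?mi ?mk // eqxx normr1 subrr mulr0.
have gradZ : frob (rgrad Q lam a (Q *m G + u *m 0)) ^+ 2 =
             ((lam i - lam k) * (a i - a k)) ^+ 2 * (2 * (c * s) ^+ 2).
  rewrite (frob_rgrad_test_point a lam_ge0 oQ Qu uu oGr) mul0mx frob0 expr0n addr0 /=.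
  set H := G^T *m (L *m G).
  have LG : L *m G = G *m H by rewrite /H mulmxA (mulmx1C oG) mul1mx.
  have -> : 2%:R *: (L *m (G *m A)) - G *m (A *m H + H *m A) = G *m (H *m A - A *m H).
    by rewrite mulmxA {1}LG -mulmxA mulmxBr mulmxDr scaler_nat mulr2n opprD addrACA subrr addr0.
  by rewrite frob_isometry // (frob_givens_commutator_sqr c s ik); ring.
apply: (error_bound_test (test_point_stiefel oQ Qu uu oGr) dFZ).
- by rewrite mulr_gt0 // subr_gt0.
- exact: c_close.
- by rewrite gradZ ler_wpM2l ?sqr_ge0 //; have := sqr_cs_le; lra.
Qed.

End TestPoints.

Lemma error_bound_gaps (R : realType) d K (Q : 'M[R]_(d, K)) (lam a : 'I_K -> R)
    (delta3 eta : R) :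
  (K < d)%N -> stiefel Q -> (forall i, 0 <= lam i) -> 0 < delta3 -> 0 < eta ->
  (forall X : 'M[R]_(d, K), stiefel X -> dF X Q <= delta3 ->
      dF X Q <= eta * frob (rgrad Q lam a X)) ->
  (forall i, 1 <= eta * `|2 * (a i * lam i)|) /\
  (forall i k, i != k -> 1 <= eta * `|(lam i - lam k) * (a i - a k)|).
Proof.
move=> K_lt_d oQ lam_ge0 d3_gt0 eta_gt0 error_bound.
have [u [Qu uu]] := exists_unit_orthogonal Q K_lt_d.
have d3sq_gt0 : 0 < delta3 ^+ 2 by rewrite exprn_gt0.
set f := delta3 ^+ 2 / (4 + delta3 ^+ 2).
have f_gt0 : 0 < f by rewrite divr_gt0 ?addr_gt0.
have f_eq : f * (4 + delta3 ^+ 2) = delta3 ^+ 2 by rewrite divfK // gt_eqF ?addr_gt0.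
have c_gt0 : 0 < 1 - f by rewrite subr_gt0; nra.
have c_lt1 : 1 - f < 1 by rewrite ltrBlDl ltrDr.
have c_close : 4 * (1 - (1 - f)) <= delta3 ^+ 2 by rewrite opprB addrC subrK; nra.
split=> [i|i k ik].
- exact: (perp_rotation_test lam_ge0 oQ Qu uu (ltW d3_gt0) eta_gt0 error_bound
           c_gt0 c_lt1 c_close).
- exact: (plane_rotation_test lam_ge0 oQ Qu uu (ltW d3_gt0) eta_gt0 error_bound
           c_gt0 c_lt1 c_close).
Qed.

Lemma exists_small_radius (R : realType) (C c0 delta : R) :
  0 <= C -> 0 < c0 -> 0 < delta <= 1 ->
  exists beta, [/\ 0 < beta, beta < 2 / 3 * delta, beta <= 1 / 2 & C * beta <= c0].
Proof.
move=> C_ge0 c0_gt0 /andP[delta_gt0 delta_le1].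
have Cc0 : 0 < C + c0 by rewrite ltr_wpDl.
pose t := c0 / (C + c0).
have t_gt0 : 0 < t by rewrite divr_gt0.
have t_le1 : t <= 1 by rewrite ler_pdivrMr // mul1r; lra.
have tC : t * C <= c0 by rewrite /t mulrAC ler_pdivrMr //; nra.
have dt : delta * t <= delta by nra.
have dtC : delta * (t * C) <= t * C by have := mulr_ge0 (ltW t_gt0) C_ge0; nra.
exists (delta / 2 * t); split; [by rewrite !mulr_gt0 ?invr_gt0 | lra | lra | lra].
Qed.

Lemma quadratic_growth (R : realType) d K (Q : 'M[R]_(d, K)) (lam a : 'I_K -> R)
    (c0 delta : R) :
  stiefel Q -> (forall i j : 'I_K, (i < j)%N -> lam j <= lam i) ->
  (forall i, 0 <= lam i) -> (forall i, 0 <= a i) -> 0 < c0 ->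
  (forall i, 2 * c0 <= a i * lam i) ->
  (forall i j : 'I_K, (i < j)%N -> 4 * c0 <= (lam i - lam j) * (a i - a j)) ->
  0 < delta <= 1 ->
  exists beta, [/\ 0 < beta, beta < 2 / 3 * delta &
    forall X, stiefel X -> dF X Q <= beta ->
      c0 * dF X Q ^+ 2 <= gfun Q lam a Q - gfun Q lam a X].
Proof.
move=> oQ lam_noninc lam_ge0 a_ge0 c0_gt0 a_lam_ge pair_gap delta01.
have lam_sum : 0 <= \sum_i lam i by apply: sumr_ge0 => i _; apply: lam_ge0.
have a_sum : 0 <= \sum_i a i by apply: sumr_ge0 => i _; apply: a_ge0.
have C_ge0 := mulr_ge0 (mulr_ge0 (mulr_ge0 (ler0n R 3) (ler0n R (K * K))) lam_sum) a_sum.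
have [beta [beta_gt0 beta_lt beta_le beta_small]] := exists_small_radius C_ge0 c0_gt0 delta01.
exists beta; split=> // X oX dF_le.
have dF_sqr_le : dF X Q ^+ 2 <= beta ^+ 2.
  by rewrite ler_sqr ?nnegrE ?dF_ge0 ?(ltW beta_gt0).
rewrite gfun_at_Q // gfun_coord // dF_stiefel_sqr //.
apply: (gap_ge (lmax := \sum_i lam i) (amax := \sum_i a i) (tau := beta)
          (stiefel_coord_orthonormal oQ oX)) => //.
- by move=> i; apply: ler_sum_term.
- by move=> i; apply: ler_sum_term.
- exact: ltW.
- by move=> k; apply: le_trans (coord_defect_le_dF oQ oX k) dF_sqr_le.
- exact: ltW.
Qed.

Lemma invr_le_of_one_le_mul (R : realType) (eta x : R) :
  0 < eta -> 0 <= x -> 1 <= eta * `|x| -> eta^-1 <= x.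
Proof.
move=> eta_gt0 x_ge0; rewrite ger0_norm // => one_le.
by rewrite -(ler_pM2l eta_gt0) mulfV ?gt_eqF.
Qed.

Theorem lemma6 (R : realType) (d K : nat) (Q : 'M[R]_(d, K))
  (lam a : 'I_K -> R) (delta3 eta : R) :
  (1 <= K)%N -> (K < d)%N ->
  stiefel Q ->
  (forall i j : 'I_K, (i < j)%N -> lam j < lam i) -> (forall i, 0 < lam i) ->
  (forall i j : 'I_K, (i < j)%N -> a j < a i) -> (forall i, 0 < a i) ->
  0 < delta3 -> delta3 < Num.sqrt 2 / 2 -> 0 < eta ->
  (forall X : 'M[R]_(d, K), stiefel X -> dF X Q <= delta3 ->
      dF X Q <= eta * frob (rgrad Q lam a X)) ->
  exists beta1 : R, 0 < beta1 /\ beta1 < 2 / 3 * delta3 /\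
    forall X : 'M[R]_(d, K), stiefel X -> dF X Q <= beta1 ->
      gfun Q lam a Q - gfun Q lam a X >= (4 * eta)^-1 * (dF X Q) ^+ 2.
Proof.
move=> _ K_lt_d oQ lam_dec lam_gt0 a_dec a_gt0 d3_gt0 d3_lt eta_gt0 error_bound.
have lam_ge0 i : 0 <= lam i := ltW (lam_gt0 i).
have a_ge0 i : 0 <= a i := ltW (a_gt0 i).
have [perp pair] := error_bound_gaps K_lt_d oQ lam_ge0 d3_gt0 eta_gt0 error_bound.
have c0E : 4 * (4 * eta)^-1 = eta^-1 by rewrite invfM mulrA mulfV ?mul1r // pnatr_eq0.
have d3_01 : 0 < delta3 <= 1.
  by rewrite d3_gt0 /=; have := sqrtr_ge0 (2 : R); have := sqr_sqrtr (ler0n R 2); nra.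
have a_lam_ge i : 2 * (4 * eta)^-1 <= a i * lam i.
  have a_lam0 := mulr_ge0 (ler0n R 2) (mulr_ge0 (a_ge0 i) (lam_ge0 i)).
  by have := invr_le_of_one_le_mul eta_gt0 a_lam0 (perp i); lra.
have pair_gap (i j : 'I_K) : (i < j)%N -> 4 * (4 * eta)^-1 <= (lam i - lam j) * (a i - a j).
  move=> ij; rewrite c0E; apply: (invr_le_of_one_le_mul eta_gt0).
    by rewrite mulr_ge0 // subr_ge0 ltW ?lam_dec ?a_dec.
  by rewrite pair // neq_ltn ij.
have c0_gt0 : 0 < (4 * eta)^-1 by rewrite invr_gt0 mulr_gt0.
have lam_noninc (i j : 'I_K) : (i < j)%N -> lam j <= lam i by move/lam_dec/ltW.
have [beta [beta_gt0 beta_lt growth]] :=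
  quadratic_growth oQ lam_noninc lam_ge0 a_ge0 c0_gt0 a_lam_ge pair_gap d3_01.
by exists beta.
Qed.
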